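(* Let $f:2^V\to\mathbb{Z}_{\ge0}$ be a connectivity function, $W\subseteq V$, and $(C_1,C_2,C_3)$ a minimum $W$-improvement. Then for every set $W'$ such that $W'\subseteq W$ or $W'\subseteq V\setminus W$, and every $i\in\{1,2,3\}$, it holds that $f(W'\cap C_i)\le f(W')$.
   Context: A connectivity function $f:2^V\to\mathbb{Z}_{\ge0}$ ($V$ finite) satisfies $f(\emptyset)=0$, $f(X)=f(V\setminus X)$, and $f(X\cup Y)+f(X\cap Y)\le f(X)+f(Y)$. For $W\subseteq V$, a $W$-improvement is a tripartition $(C_1,C_2,C_3)$ of $V$ (pairwise disjoint, possibly empty, union $V$) with $f(C_i)<f(W)/2$, $f(C_i\cap W)<f(W)$, $f(C_i\cap(V\setminus W))<f(W)$ for each $i$. Its width is $\max_i f(C_i)$, its sum-width is $\sum_i f(C_i)$, and its arity is the number of nonempty $C_i$. A $W$-improvement is minimum if it has minimum width among all $W$-improvements, subject to that minimum arity, and subject to those minimum sum-width. *)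

From mathcomp Require Import all_boot.
Set Implicit Arguments. Unset Strict Implicit. Unset Printing Implicit Defensive.

Definition connectivity (V : finType) (f : {set V} -> nat) : Prop :=
  [/\ f set0 = 0,
      forall X, f X = f (~: X)
    & forall X Y, f (X :|: Y) + f (X :&: Y) <= f X + f Y].

Definition tripartition (V : finType) (C : 'I_3 -> {set V}) : Prop :=
  (forall i j, i != j -> [disjoint C i & C j]) /\
  (forall x : V, exists i, x \in C i).

(* f(C_i) < f(W)/2 is encoded as 2 * f(C_i) < f(W) (exact over integers) *)
Definition improvement (V : finType) (f : {set V} -> nat) (W : {set V})
  (C : 'I_3 -> {set V}) : Prop :=
  tripartition C /\
  forall i, [/\ 2 * f (C i) < f W, f (C i :&: W) < f W
              & f (C i :&: ~: W) < f W].

Definition width (V : finType) (f : {set V} -> nat) (C : 'I_3 -> {set V}) :=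
  \max_(i < 3) f (C i).
Definition sumwidth (V : finType) (f : {set V} -> nat) (C : 'I_3 -> {set V}) :=
  \sum_(i < 3) f (C i).
Definition arity (V : finType) (C : 'I_3 -> {set V}) :=
  #|[set i : 'I_3 | C i != set0]|.

Definition min_improvement (V : finType) (f : {set V} -> nat) (W : {set V})
  (C : 'I_3 -> {set V}) : Prop :=
  improvement f W C /\
  forall D, improvement f W D ->
    width f C < width f D \/
    (width f C = width f D /\
      (arity C < arity D \/
       (arity C = arity D /\ sumwidth f C <= sumwidth f D))).

(* Suppose W' ⊆ W but f(W' ∩ C_i) > f(W').  Among the sets Y with
   C_i ⊆ Y ⊆ C_i ∪ W' pick one of minimum connectivity; by submodularity
   f(Y) ≤ f(C_i ∪ W') < f(C_i).  Replacing C_i by Y and every other part C_k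
   by C_k \ Y yields another tripartition, and the minimality of Y, through
   submodularity and symmetry, shows that no relevant value of f increases.
   This is again a W-improvement, of no larger width or arity and of strictly
   smaller sum-width: a contradiction.  The case W' ⊆ V \ W is the same with
   W replaced by its complement, which has the same W-improvements. *)

From mathcomp Require Import all_boot.
From mathcomp Require Import zify.

Set Implicit Arguments.
Unset Strict Implicit.
Unset Printing Implicit Defensive.

Section Uncrossing.
Variables (V : finType) (f : {set V} -> nat).
Hypothesis f_conn : connectivity f.

Lemma connectivity_set0 : f set0 = 0.
Proof. by case: f_conn. Qed.

Lemma connectivity_setC X : f (~: X) = f X.
Proof. by case: f_conn => _ fC _; rewrite -fC. Qed.

Lemma connectivity_submod X Y : f (X :|: Y) + f (X :&: Y) <= f X + f Y.
Proof. by case: f_conn. Qed.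

Variables A B Y : {set V}.
Hypotheses (sAY : A \subset Y) (sYB : Y \subset B).
Hypothesis Y_min : forall Z : {set V}, A \subset Z -> Z \subset B -> f Y <= f Z.

Lemma min_interval_setI (Z : {set V}) : Z \subset B -> f (Y :&: Z) <= f Z.
Proof.
move=> sZB; have := connectivity_submod Y Z.
have : f Y <= f (Y :|: Z).
  by apply: Y_min; rewrite ?subUset ?sYB ?sZB // (subset_trans sAY) ?subsetUl.
lia.
Qed.

Lemma min_interval_setD (S : {set V}) : [disjoint S & A] -> f (S :\: Y) <= f S.
Proof.
(* Y :\: S is in the interval; uncross it with S through complements. *)
move=> dSA; have := connectivity_submod S (~: Y).
have -> : S :|: ~: Y = ~: (Y :\: S) by rewrite setCD setUC.
rewrite -setDE !connectivity_setC.
have : f Y <= f (Y :\: S).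
  apply: Y_min; last exact: subset_trans (subsetDl _ _) sYB.
  by rewrite subsetD sAY disjoint_sym.
lia.
Qed.

End Uncrossing.

Definition absorb (V : finType) (C : 'I_3 -> {set V}) (i : 'I_3) (Y : {set V})
  (k : 'I_3) : {set V} :=
  if k == i then Y else C k :\: Y.

Lemma absorb_at (V : finType) (C : 'I_3 -> {set V}) (i : 'I_3) (Y : {set V}) :
  absorb C i Y i = Y.
Proof. by rewrite /absorb eqxx. Qed.

Lemma tripartition_absorb (V : finType) (C : 'I_3 -> {set V}) (i : 'I_3)
  (Y : {set V}) :
  tripartition C -> C i \subset Y -> tripartition (absorb C i Y).
Proof.
rewrite /absorb => -[disjC covC] sCY; split.
  move=> j k jk; rewrite -setI_eq0.
  case: (eqVneq j i) => [ji|_]; case: (eqVneq k i) => [ki|_].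
  - by rewrite ji ki eqxx in jk.
  - by rewrite setIDA setD_eq0 subsetIl.
  - by rewrite setIDAC setD_eq0 subsetIr.
  - by rewrite -setDIl setD_eq0 (disjoint_setI0 (disjC j k jk)) sub0set.
move=> x; case xY: (x \in Y); first by exists i; rewrite eqxx.
have [k xCk] := covC x; exists k; case: eqVneq => [ki|_].
  by rewrite ki in xCk; rewrite (subsetP sCY x xCk) in xY.
by rewrite inE xY xCk.
Qed.

Section PartwiseComparison.
Variables (V : finType) (f : {set V} -> nat) (C D : 'I_3 -> {set V}).
Hypothesis f_DC : forall k, f (D k) <= f (C k).

Lemma width_le : width f D <= width f C.
Proof.
by apply/bigmax_leqP => k _; apply: leq_trans (f_DC k) (leq_bigmax k).
Qed.

Lemma sumwidth_lt i : f (D i) < f (C i) -> sumwidth f D < sumwidth f C.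
Proof.
move=> f_DCi; rewrite /sumwidth (bigD1 i) // [X in _ < X](bigD1 i) //=.
by rewrite -addSn leq_add // leq_sum.
Qed.

Lemma improvement_le W :
  tripartition D ->
  (forall k, f (D k :&: W) <= f (C k :&: W)) ->
  (forall k, f (D k :&: ~: W) <= f (C k :&: ~: W)) ->
  improvement f W C -> improvement f W D.
Proof.
move=> tD f_DCW f_DCnW [_ HC]; split=> // k.
have := f_DC k; have := f_DCW k; have := f_DCnW k.
by case: (HC k) => *; split; lia.
Qed.

End PartwiseComparison.

Lemma arity_le (V : finType) (C D : 'I_3 -> {set V}) :
  (forall k, D k != set0 -> C k != set0) -> arity D <= arity C.
Proof.
by move=> DC; apply/subset_leq_card/subsetP => k; rewrite !inE; apply: DC.
Qed.

Lemma arity_absorb (V : finType) (C : 'I_3 -> {set V}) (i : 'I_3)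
  (Y : {set V}) :
  C i != set0 -> arity (absorb C i Y) <= arity C.
Proof.
move=> Ci_neq0; apply: arity_le => k; rewrite /absorb.
case: (eqVneq k i) => [-> _ //|_].
by apply: contra_neq => ->; apply: set0D.
Qed.

Lemma min_improvement_sumwidth (V : finType) (f : {set V} -> nat) W C D :
  min_improvement f W C -> improvement f W D ->
  width f D <= width f C -> arity D <= arity C -> sumwidth f C <= sumwidth f D.
Proof. by case=> _ minC /minC; lia. Qed.

Lemma improvement_setC (V : finType) (f : {set V} -> nat) W C :
  connectivity f -> improvement f (~: W) C <-> improvement f W C.
Proof.
move=> f_conn; suff imp X : improvement f (~: X) C -> improvement f X C.
  by split; [apply: imp | rewrite -{1}(setCK W); apply: imp].
case=> tC HC; split=> // k.
by have := HC k; rewrite setCK connectivity_setC // => -[].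
Qed.

Lemma min_improvement_setC (V : finType) (f : {set V} -> nat) W C :
  connectivity f -> min_improvement f W C -> min_improvement f (~: W) C.
Proof.
move=> f_conn [impC minC].
by split=> [|D]; rewrite improvement_setC //; apply: minC.
Qed.

Section MinimalAbsorption.
Variables (V : finType) (f : {set V} -> nat) (W W' Y : {set V}).
Variables (C : 'I_3 -> {set V}) (i : 'I_3).
Hypotheses (f_conn : connectivity f) (tC : tripartition C).
Hypothesis sW'W : W' \subset W.
Hypotheses (sCY : C i \subset Y) (sYU : Y \subset C i :|: W').
Hypothesis Y_min :
  forall Z : {set V}, C i \subset Z -> Z \subset C i :|: W' -> f Y <= f Z.
Hypothesis f_W'C : f W' < f (W' :&: C i).

Let D := absorb C i Y.

Lemma absorb_min_lt : f Y < f (C i).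
Proof.
have := Y_min (subsetUl _ _) (subxx _).
by have := connectivity_submod f_conn (C i) W'; rewrite setIC; lia.
Qed.

Lemma absorb_min_setI : f (Y :&: W) <= f (C i :&: W).
Proof.
(* Uncross Y with Z := (C_i ∩ W) ∪ W', which lies in the interval and has
   f(Z) < f(C_i ∩ W) by submodularity, as f(W' ∩ C_i) > f(W'). *)
have -> : Y :&: W = Y :&: (C i :&: W :|: W').
  apply/setP=> x; rewrite !inE; case xY: (x \in Y) => //=.
  move: (subsetP sYU x xY) (subsetP sW'W x); rewrite inE.
  by case: (x \in C i); case: (x \in W'); case: (x \in W) => // _ /(_ isT).
have sZU : C i :&: W :|: W' \subset C i :|: W' by rewrite setSU ?subsetIl.
have := min_interval_setI f_conn sCY sYU Y_min sZU.
have := connectivity_submod f_conn (C i :&: W) W'.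
by rewrite -setIA (setIidPr sW'W) (setIC (C i) W'); lia.
Qed.

Lemma absorb_min_setIC : Y :&: ~: W = C i :&: ~: W.
Proof.
apply/eqP; rewrite eqEsubset (setSI _ sCY) andbT; apply/subsetP => x.
rewrite !inE => /andP[/(subsetP sYU) /setUP[-> -> //|xW']].
by rewrite (subsetP sW'W x xW').
Qed.

Lemma absorb_min_le_off (k : 'I_3) (X : {set V}) :
  k != i -> f (D k :&: X) <= f (C k :&: X).
Proof.
have [disjC _] := tC.
move=> ki; rewrite /D /absorb (negbTE ki) setIDAC.
apply: (min_interval_setD f_conn sCY sYU Y_min).
exact: disjointWl (subsetIl _ _) (disjC k i ki).
Qed.

Lemma absorb_min_le k : f (D k) <= f (C k).
Proof.
case: (eqVneq k i) => [->|ki]; first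
  by rewrite /D absorb_at ltnW ?absorb_min_lt.
by rewrite -(setIT (D k)) -(setIT (C k)) absorb_min_le_off.
Qed.

Lemma improvement_absorb_min : improvement f W C -> improvement f W D.
Proof.
apply: (improvement_le absorb_min_le); first exact: tripartition_absorb.
  move=> k; case: (eqVneq k i) => [->|/absorb_min_le_off //].
  by rewrite /D absorb_at absorb_min_setI.
move=> k; case: (eqVneq k i) => [->|/absorb_min_le_off //].
by rewrite /D absorb_at absorb_min_setIC.
Qed.

Lemma absorb_min_not_min_improvement : ~ min_improvement f W C.
Proof.
move=> minC; have Ci_neq0 : C i != set0.
  by apply: contraTneq f_W'C => ->; rewrite setI0 connectivity_set0.
have := min_improvement_sumwidth minC (improvement_absorb_min minC.1)
  (width_le absorb_min_le) (arity_absorb Y Ci_neq0).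
have f_Di : f (D i) < f (C i) by rewrite /D absorb_at absorb_min_lt.
by have := sumwidth_lt absorb_min_le f_Di; lia.
Qed.

End MinimalAbsorption.

Lemma min_improvement_subset (V : finType) (f : {set V} -> nat) W C
  (W' : {set V}) (i : 'I_3) :
  connectivity f -> min_improvement f W C -> W' \subset W ->
  f (W' :&: C i) <= f W'.
Proof.
move=> f_conn minC sW'W; have [[tC _] _] := minC.
rewrite leqNgt; apply/negP => f_W'C.
pose P (Y : {set V}) := (C i \subset Y) && (Y \subset C i :|: W').
have P_Ci : P (C i) by rewrite /P subxx subsetUl.
have [Y /andP[sCY sYU] Y_min] := arg_minnP f P_Ci.
have {}Y_min (Z : {set V}) :
    C i \subset Z -> Z \subset C i :|: W' -> f Y <= f Z.
  by move=> sCZ sZU; apply: Y_min; rewrite /P sCZ.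
exact: absorb_min_not_min_improvement f_conn tC sW'W sCY sYU Y_min f_W'C minC.
Qed.

Theorem lemma2 (V : finType) (f : {set V} -> nat) (W : {set V})
  (C : 'I_3 -> {set V}) :
  connectivity f -> min_improvement f W C ->
  forall W' : {set V}, (W' \subset W \/ W' \subset ~: W) ->
  forall i : 'I_3, f (W' :&: C i) <= f W'.
Proof.
move=> f_conn minC W' [sW'W | sW'nW] i.
  exact: min_improvement_subset minC sW'W.
exact: min_improvement_subset (min_improvement_setC f_conn minC) sW'nW.
Qed.
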